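(* Letting \begin{align*} \mathsf{D} & = \gamma_2 \mathsf{C_2^T W^{-1}}\bigl(\mathsf{I}_\ell-\bigl(\mathsf{I}_\ell+\gamma_1 \mathsf{C A^{-1} C^T W^{-1}}\bigr)^{-1}\bigr), \\ \mathsf{E} & = \mathsf{C_2 A_{22}^{-1}}, \\ \mathsf{G} & = \mathsf{I}_\ell - \gamma_1 \mathsf{C_2 A_{22}^{-1} C_2^T W^{-1}}, \\ \mathsf{F} & = \bigl(\mathsf{I}_\ell + \gamma_1 \mathsf{C A^{-1} C^T W^{-1}}\bigr)^{-1}, \end{align*} the right-preconditioned matrix can be written as: \begin{equation*} \mathcal{A}_{\gamma_1,\gamma_2} \widetilde{\mathcal{P}}_{\gamma_1,\gamma_2}^{-1} = \begin{bmatrix} \mathsf{I}_n & 0 & 0 \\ \mathsf{A_{21} A_{11}^{-1}} & \mathsf{I}_m-\mathsf{DE} & \mathsf{DG}\left(\frac{1}{\gamma_1}\mathsf{W}\right)\hat{\mathsf{S}}^{-1} \\ \mathsf{C A_{11}^{-1}} & -\mathsf{FE} & \left(\mathsf{I}_\ell-\mathsf{FG}\right) \left(-\frac{1}{\gamma_1}\mathsf{W}\right)\hat{\mathsf{S}}^{-1} \end{bmatrix}. \end{equation*}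
   Context: Let $\mathsf{A}\in\mathbb{R}^{n\times n}$ be symmetric positive definite, $\mathsf{A_2}\in\mathbb{R}^{m\times m}$ symmetric positive semidefinite with $\ker(\mathsf{A_2})=\operatorname{span}\{\mathsf{1}\}$, $\mathsf{C}\in\mathbb{R}^{\ell\times n}$ of full row rank, $\mathsf{C_2}\in\mathbb{R}^{\ell\times m}$ with $\mathsf{1}\notin\ker(\mathsf{C_2})$, $\mathsf{W}\in\mathbb{R}^{\ell\times\ell}$ symmetric positive definite, $\gamma_1,\gamma_2>0$, and $\hat{\mathsf{S}}\in\mathbb{R}^{\ell\times\ell}$ invertible. Define $\mathsf{A_{11}}=\mathsf{A}+\gamma_1\mathsf{C^TW^{-1}C}$, $\mathsf{A_{12}}=-\gamma_1\mathsf{C^TW^{-1}C_2}$, $\mathsf{A_{21}}=-\gamma_2\mathsf{C_2^TW^{-1}C}$, $\mathsf{A_{22}}=\mathsf{A_2}+\gamma_2\mathsf{C_2^TW^{-1}C_2}$ (so $\mathsf{A_{11}}$ and $\mathsf{A_{22}}$ are invertible), the augmented matrix $\mathcal{A}_{\gamma_1,\gamma_2}=\begin{bmatrix}\mathsf{A_{11}}&\mathsf{A_{12}}&\mathsf{C^T}\\ \mathsf{A_{21}}&\mathsf{A_{22}}&-\mathsf{C_2^T}\\ \mathsf{C}&-\mathsf{C_2}&0\end{bmatrix}$ and the modified augmented Lagrangian preconditioner $\widetilde{\mathcal{P}}_{\gamma_1,\gamma_2}=\begin{bmatrix}\mathsf{A_{11}}&\mathsf{A_{12}}&\mathsf{C^T}\\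 0&\mathsf{A_{22}}&-\mathsf{C_2^T}\\ 0&0&\hat{\mathsf{S}}\end{bmatrix}$. *)

From mathcomp Require Import all_boot all_order all_algebra.
Set Implicit Arguments. Unset Strict Implicit. Unset Printing Implicit Defensive.
Import Order.TTheory GRing.Theory Num.Theory.
Local Open Scope ring_scope.

Section Defs.
Variable R : realFieldType.

Definition spd (k : nat) (M : 'M[R]_k) : Prop :=
  M^T = M /\ forall x : 'cV[R]_k, x != 0 -> 0 < (x^T *m M *m x) 0 0.

Definition spsd (k : nat) (M : 'M[R]_k) : Prop :=
  M^T = M /\ forall x : 'cV[R]_k, 0 <= (x^T *m M *m x) 0 0.

Definition ones (k : nat) : 'cV[R]_k := const_mx 1.

Variables (n m l : nat) (A : 'M[R]_n) (A2 : 'M[R]_m) (C : 'M[R]_(l, n))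
  (C2 : 'M[R]_(l, m)) (W : 'M[R]_l) (g1 g2 : R) (Shat : 'M[R]_l).

Definition A11 : 'M[R]_n := A + g1 *: (C^T *m invmx W *m C).
Definition A12 : 'M[R]_(n, m) := - (g1 *: (C^T *m invmx W *m C2)).
Definition A21 : 'M[R]_(m, n) := - (g2 *: (C2^T *m invmx W *m C)).
Definition A22 : 'M[R]_m := A2 + g2 *: (C2^T *m invmx W *m C2).

Definition Aaug : 'M[R]_(n + m + l) :=
  block_mx (block_mx A11 A12 A21 A22) (col_mx C^T (- C2^T))
           (row_mx C (- C2)) 0.

Definition Ptilde : 'M[R]_(n + m + l) :=
  block_mx (block_mx A11 A12 0 A22) (col_mx C^T (- C2^T))
           0 Shat.

Definition Fmx : 'M[R]_l :=
  invmx (1%:M + g1 *: (C *m invmx A *m C^T *m invmx W)).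
Definition Dmx : 'M[R]_(m, l) :=
  g2 *: (C2^T *m invmx W *m (1%:M - Fmx)).
Definition Emx : 'M[R]_(l, m) := C2 *m invmx A22.
Definition Gmx : 'M[R]_l := 1%:M - g1 *: (C2 *m invmx A22 *m C2^T *m invmx W).

Definition RHSmx : 'M[R]_(n + m + l) :=
  block_mx
    (block_mx 1%:M 0 (A21 *m invmx A11) (1%:M - Dmx *m Emx))
    (col_mx 0 (Dmx *m Gmx *m (g1^-1 *: W) *m invmx Shat))
    (row_mx (C *m invmx A11) (- (Fmx *m Emx)))
    ((1%:M - Fmx *m Gmx) *m ((- g1^-1) *: W) *m invmx Shat).

End Defs.

From mathcomp Require Import all_boot all_order all_algebra.
From mathcomp Require Import lra.
Import Order.TTheory GRing.Theory Num.Theory.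
Set Implicit Arguments. Unset Strict Implicit. Unset Printing Implicit Defensive.
Local Open Scope ring_scope.

(* Multiplying on the right by Ptilde reduces the claim to the block identity
   RHS * Ptilde = Aaug, checked block by block.  The nontrivial blocks rest on two
   facts: the push-through identity
     V (A + U V)^-1 U = I - (I + V A^-1 U)^-1,
   which for U = g1 C^T W^-1 and V = C reads g1 C A11^-1 C^T W^-1 = I - F, and
   G (W / g1) = W / g1 - E C2^T.  Ptilde is block upper triangular, hence
   invertible along with A11 and A22: A11 is positive definite, and a null
   vector x of the quadratic form of A22 satisfies A2 x = 0 and C2 x = 0, so x
   lies in span{1}, where C2 does not vanish. *)

Section PushThrough.
Variables (R : comUnitRingType) (n k : nat).
Variables (A : 'M[R]_n) (U : 'M[R]_(n, k)) (V : 'M[R]_(k, n)).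
Hypotheses (uA : A \in unitmx) (uAUV : A + U *m V \in unitmx).

Lemma mulmx_push_through :
  V *m invmx (A + U *m V) *m U *m (1%:M + V *m invmx A *m U) = V *m invmx A *m U.
Proof.
have AUV_Ai_U : (A + U *m V) *m invmx A *m U = U *m (1%:M + V *m invmx A *m U).
  by rewrite !mulmxDl mulmxV // mul1mx mulmxDr mulmx1 !mulmxA.
by rewrite -[_ *m U *m _]mulmxA -AUV_Ai_U !mulmxA mulmxKV.
Qed.

Lemma push_through_unitmx : 1%:M + V *m invmx A *m U \in unitmx.
Proof.
set Q := 1%:M + _.
suff /mulmx1_unit[] : (1%:M - V *m invmx (A + U *m V) *m U) *m Q = 1%:M by [].
by rewrite mulmxBl mulmx_push_through mul1mx /Q addrK.
Qed.

Lemma push_through :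
  V *m invmx (A + U *m V) *m U = 1%:M - invmx (1%:M + V *m invmx A *m U).
Proof.
have uQ := push_through_unitmx.
rewrite -[LHS](mulmxK uQ) mulmx_push_through.
set Q := 1%:M + _.
have -> : V *m invmx A *m U = Q - 1%:M by rewrite [_ - _]addrC addKr.
by rewrite mulmxBl mulmxV // mul1mx.
Qed.

End PushThrough.

Lemma linear_quadratic_ge0_eq0 (R : realFieldType) (b c : R) :
  0 <= c -> (forall t, 0 <= 2 * t * b + t ^+ 2 * c) -> b = 0.
Proof.
move=> c_ge0 ge0; have c1_gt0 : 0 < c + 1 by lra.
have := ge0 (- b / (c + 1)); set t := - b / (c + 1) => t_ge0.
have tc : t * (c + 1) = - b by rewrite mulfVK // lt0r_neq0.
nra.
Qed.

Section QuadraticForms.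
Variable R : realFieldType.

Definition bilin k (M : 'M[R]_k) (x y : 'cV[R]_k) : R := (x^T *m M *m y) 0 0.

Local Notation quad M x := (bilin M x x).

Lemma bilinDr k (M : 'M[R]_k) x y z : bilin M x (y + z) = bilin M x y + bilin M x z.
Proof. by rewrite /bilin mulmxDr mxE. Qed.

Lemma bilinZr k (M : 'M[R]_k) a x y : bilin M x (a *: y) = a * bilin M x y.
Proof. by rewrite /bilin -scalemxAr mxE. Qed.

Lemma bilinC k (M : 'M[R]_k) x y : M^T = M -> bilin M x y = bilin M y x.
Proof.
move=> sM; have tr11 (B : 'M[R]_1) : B 0 0 = B^T 0 0 by rewrite mxE.
by rewrite /bilin tr11 !trmx_mul sM trmxK mulmxA.
Qed.

Lemma quadDM k (M N : 'M[R]_k) x : quad (M + N) x = quad M x + quad N x.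
Proof. by rewrite /bilin mulmxDr mulmxDl mxE. Qed.

Lemma quadZM k (M : 'M[R]_k) a x : quad (a *: M) x = a * quad M x.
Proof. by rewrite /bilin -scalemxAr -scalemxAl mxE. Qed.

Lemma quad_congr k p (M : 'M[R]_k) (B : 'M[R]_(k, p)) x :
  quad (B^T *m M *m B) x = quad M (B *m x).
Proof. by rewrite /bilin trmx_mul !mulmxA. Qed.

Lemma quad_spd_ge0 k (M : 'M[R]_k) x : spd M -> 0 <= quad M x.
Proof.
case=> _ M_gt0; have [->|x_neq0] := eqVneq x 0; last exact/ltW/M_gt0.
by rewrite /bilin mulmx0 mxE.
Qed.

Lemma quad_spd_eq0 k (M : 'M[R]_k) x : spd M -> quad M x = 0 -> x = 0.
Proof.
case=> _ M_gt0 qx0; apply/eqP; apply: contraT => /M_gt0.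
by rewrite -/(bilin M x x) qx0 ltxx.
Qed.

Lemma quad_spsd_eq0 k (M : 'M[R]_k) x : spsd M -> quad M x = 0 -> M *m x = 0.
Proof.
case=> sM M_ge0 qx0; apply/matrixP => i j; rewrite [j]ord1 [RHS]mxE.
set y : 'cV[R]_k := delta_mx i 0.
have -> : (M *m x) i 0 = bilin M y x by rewrite /bilin -mulmxA trmx_delta -rowE !mxE.
apply: (linear_quadratic_ge0_eq0 (M_ge0 y)) => t.
have := M_ge0 (x + t *: y); rewrite -/(bilin M _ _) -/(bilin M y y).
rewrite !bilinDr !bilinZr !(bilinC (x + t *: y)) // !bilinDr !bilinZr.
by rewrite qx0 (bilinC x y) //; lra.
Qed.

Lemma unitmx_quad_definite k (M : 'M[R]_k) :
  (forall x, quad M x = 0 -> x = 0) -> M \in unitmx.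
Proof.
move=> M_def; rewrite unitmxE unitfE; apply/negP => /det0P [v v_neq0 vM0].
have : quad M v^T = 0 by rewrite /bilin trmxK vM0 mul0mx mxE.
by move/M_def/eqP; rewrite trmx_eq0 (negbTE v_neq0).
Qed.

Lemma spd_unitmx k (M : 'M[R]_k) : spd M -> M \in unitmx.
Proof. by move=> M_spd; apply: unitmx_quad_definite => x; apply: quad_spd_eq0. Qed.

Lemma spd_invmx k (M : 'M[R]_k) : spd M -> spd (invmx M).
Proof.
move=> M_spd; have uM := spd_unitmx M_spd; case: M_spd => sM M_gt0; split.
  by rewrite trmx_inv sM.
move=> x x_neq0; have := M_gt0 (invmx M *m x).
rewrite trmx_mul trmx_inv sM -!mulmxA (mulmxA M) mulmxV // mul1mx mulmxA; apply.
by apply: contra x_neq0 => /eqP Mix0; rewrite -[x](mulKVmx uM) Mix0 mulmx0.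
Qed.

End QuadraticForms.

Section Invertibility.
Variables (R : realFieldType) (n m l : nat).
Variables (A : 'M[R]_n) (A2 : 'M[R]_m) (C : 'M[R]_(l, n)) (C2 : 'M[R]_(l, m)).
Variables (W : 'M[R]_l) (g1 g2 : R).

Local Notation quad M x := (bilin M x x).

Lemma A11_unitmx : spd A -> spd W -> 0 <= g1 -> A11 A C W g1 \in unitmx.
Proof.
move=> A_spd W_spd g1_ge0; apply: unitmx_quad_definite => x.
rewrite /A11 quadDM quadZM quad_congr => qx0.
have := quad_spd_ge0 x A_spd; have := quad_spd_ge0 (C *m x) (spd_invmx W_spd).
by move=> ? ?; apply: (quad_spd_eq0 A_spd); nra.
Qed.

Lemma A22_unitmx : spsd A2 ->
  (forall x : 'cV[R]_m, A2 *m x = 0 <-> exists c : R, x = c *: ones R m) ->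
  C2 *m ones R m != 0 -> spd W -> 0 < g2 -> A22 A2 C2 W g2 \in unitmx.
Proof.
move=> A2_spsd kerA2 C2_ones W_spd g2_gt0; apply: unitmx_quad_definite => x.
rewrite /A22 quadDM quadZM quad_congr => qx0.
have : 0 <= quad A2 x := proj2 A2_spsd x.
have := quad_spd_ge0 (C2 *m x) (spd_invmx W_spd).
move=> ? ?; have /(quad_spsd_eq0 A2_spsd)/kerA2[c x_ones] : quad A2 x = 0 by nra.
have /(quad_spd_eq0 (spd_invmx W_spd))/eqP : quad (invmx W) (C2 *m x) = 0 by nra.
rewrite x_ones -scalemxAr scalemx_eq0 (negbTE C2_ones) orbF => /eqP ->.
by rewrite scale0r.
Qed.

Lemma Ptilde_unitmx (Shat : 'M[R]_l) :
  A11 A C W g1 \in unitmx -> A22 A2 C2 W g2 \in unitmx -> Shat \in unitmx ->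
  Ptilde A A2 C C2 W g1 g2 Shat \in unitmx.
Proof.
move=> uA11 uA22 uS.
by rewrite unitmxE /Ptilde !det_ublock !unitrM -!unitmxE uA11 uA22 uS.
Qed.

End Invertibility.

Section PreconditionedBlocks.
Variables (R : realFieldType) (n m l : nat).
Variables (A : 'M[R]_n) (A2 : 'M[R]_m) (C : 'M[R]_(l, n)) (C2 : 'M[R]_(l, m)).
Variables (W : 'M[R]_l) (g1 g2 : R) (Shat : 'M[R]_l).
Hypotheses (uA : A \in unitmx) (uW : W \in unitmx) (uS : Shat \in unitmx).
Hypotheses (uA11 : A11 A C W g1 \in unitmx) (uA22 : A22 A2 C2 W g2 \in unitmx).
Hypothesis g1_neq0 : g1 != 0.

Local Notation A11i := (invmx (A11 A C W g1)).
Local Notation F := (Fmx A C W g1).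
Local Notation D := (Dmx A C C2 W g1 g2).
Local Notation E := (Emx A2 C2 W g2).
Local Notation G := (Gmx A2 C2 W g1 g2).
Local Notation Wg := (g1^-1 *: W).

Lemma push_through_A11 : g1 *: (C *m A11i *m C^T *m invmx W) = 1%:M - F.
Proof.
have A11E : A11 A C W g1 = A + g1 *: (C^T *m invmx W) *m C by rewrite -scalemxAl.
have := push_through (U := g1 *: (C^T *m invmx W)) (V := C) uA.
rewrite -A11E => /(_ uA11).
by rewrite /Fmx -!scalemxAr !mulmxA.
Qed.

Lemma C_A11inv_Ct : C *m A11i *m C^T = (1%:M - F) *m Wg.
Proof.
rewrite -push_through_A11 -scalemxAr -scalemxAl scalerA mulVf // scale1r.
by rewrite mulmxKV.
Qed.

Lemma C_A11inv_A12 : C *m A11i *m A12 C C2 W g1 = - ((1%:M - F) *m C2).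
Proof.
by rewrite /A12 mulmxN -push_through_A11 -!scalemxAr -!scalemxAl !mulmxA.
Qed.

Lemma A21_A11inv_A12 : A21 C C2 W g2 *m A11i *m A12 C C2 W g1 = D *m C2.
Proof.
rewrite /A21 /Dmx !mulNmx -!scalemxAl -!mulmxA (mulmxA C) C_A11inv_A12.
by rewrite !mulmxN scalerN opprK.
Qed.

Lemma A21_A11inv_Ct : A21 C C2 W g2 *m A11i *m C^T = - (D *m Wg).
Proof.
by rewrite /A21 /Dmx !mulNmx -!scalemxAl -!mulmxA (mulmxA C) C_A11inv_Ct.
Qed.

Lemma Gmx_Wg : G *m Wg = Wg - E *m C2^T.
Proof.
rewrite /Gmx /Emx mulmxBl mul1mx -scalemxAl -scalemxAr scalerA mulrC mulVf //.
by rewrite scale1r mulmxKV.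
Qed.

Lemma RHSmx_mulmx_Ptilde :
  RHSmx A A2 C C2 W g1 g2 Shat *m Ptilde A A2 C C2 W g1 g2 Shat
  = Aaug A A2 C C2 W g1 g2.
Proof.
rewrite /RHSmx /Ptilde /Aaug mulmx_block !mulmx0 !addr0 mulmx_block mul_block_col
  mul_col_mx add_col_mx mul_row_block mul_row_col !mulmxKV //.
rewrite ?mulmx0 ?mul0mx ?mul1mx ?addr0 ?add0r.
have EA22 : E *m A22 A2 C2 W g2 = C2 by rewrite mulmxKV.
congr block_mx; first congr block_mx.
- by rewrite A21_A11inv_A12 mulmxBl mul1mx -mulmxA EA22 addrC subrK.
- congr col_mx; rewrite A21_A11inv_Ct -mulmxA Gmx_Wg.
  rewrite mulmxN mulmxBl mul1mx mulmxBr !mulmxA.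
  by rewrite opprB addrACA addNr add0r addrC addKr.
- congr row_mx; rewrite C_A11inv_A12 mulNmx -mulmxA EA22 mulmxBl mul1mx.
  by rewrite opprB addrC addKr.
- rewrite C_A11inv_Ct mulNmx mulmxN opprK scaleNr mulmxN !mulmxBl !mul1mx.
  rewrite -[F *m G *m Wg]mulmxA Gmx_Wg mulmxBr [F *m (E *m _)]mulmxA.
  by apply/eqP; rewrite subr_eq0 opprB addrAC addrA.
Qed.

End PreconditionedBlocks.

Theorem mainTheorem7 (R : realFieldType) (n m l : nat)
  (A : 'M[R]_n) (A2 : 'M[R]_m) (C : 'M[R]_(l, n)) (C2 : 'M[R]_(l, m))
  (W : 'M[R]_l) (g1 g2 : R) (Shat : 'M[R]_l) :
  spd A ->
  spsd A2 ->
  (forall x : 'cV[R]_m, A2 *m x = 0 <-> exists c : R, x = c *: ones R m) ->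
  \rank C = l ->
  C2 *m ones R m != 0 ->
  spd W ->
  0 < g1 -> 0 < g2 ->
  Shat \in unitmx ->
  Aaug A A2 C C2 W g1 g2 *m invmx (Ptilde A A2 C C2 W g1 g2 Shat)
  = RHSmx A A2 C C2 W g1 g2 Shat.
Proof.
move=> A_spd A2_spsd kerA2 _ C2_ones W_spd g1_gt0 g2_gt0 uS.
have uA11 := A11_unitmx C A_spd W_spd (ltW g1_gt0).
have uA22 := A22_unitmx A2_spsd kerA2 C2_ones W_spd g2_gt0.
have uP := Ptilde_unitmx uA11 uA22 uS.
have uA := spd_unitmx A_spd; have uW := spd_unitmx W_spd.
have g1_neq0 : g1 != 0 := lt0r_neq0 g1_gt0.
by rewrite -(RHSmx_mulmx_Ptilde uA uW uS uA11 uA22 g1_neq0) mulmxK.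
Qed.
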